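(* Let $d\ge 2$, let $\Omega=(a_1,b_1)\times\cdots\times(a_d,b_d)$, and let $\mathcal{T}_{\mathbf h}$, $\mathcal{T}_{\mathbf h}'$, $\mathcal S_{\mathbf h}$ and the matrices $\widetilde{D}_{ij,0},\widehat{D}_{ij,0},\overline{D}_{ij,0}\in\mathbb R^{J_0\times J_0}$ be as described in the context. Then for all $i,j\in\{1,\dots,d\}$ the matrix $\widetilde{D}_{ij,0}-\widehat{D}_{ij,0}$ is symmetric positive definite. Furthermore, $-\widehat{D}_{ij,0} > -\overline{D}_{ij,0} > -\widetilde{D}_{ij,0}$ for all $i,j\in\{1,\dots,d\}$, where for matrices $X>Y$ means that $X-Y$ is symmetric positive definite.
   Context: Grid: for integers $J_i\ge 2$ put $h_i=(b_i-a_i)/(J_i-1)$, $\mathbf h=(h_1,\dots,h_d)$, and nodes $\mathbf x_\alpha=(a_1+(\alpha_1-1)h_1,\dots,a_d+(\alpha_d-1)h_d)$ for multi-indices $\alpha$ with $1\le\alpha_i\le J_i$; $\mathcal T_{\mathbf h}$ is the set of these nodes. The extended mesh is $\mathcal T_{\mathbf h}'=\mathcal T_{\mathbf h}\cup\{\mathbf y\pm 2h_i\mathbf e_i:\mathbf y\in\mathcal T_{\mathbf h}\cap\Omega,\ 1\le i\le d\}$ (the added points, lying outside $\overline\Omega$, are ghost points); $\{\mathbf e_i\}$ is the canonical basis. For a grid function $V$ on $\mathcal T_{\mathbf h}'$ write $V_\alpha=V(\mathbf x_\alpha)$ and define $\delta^+_{x_i,h_i}V(\mathbf x)=(V(\mathbf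 x+h_i\mathbf e_i)-V(\mathbf x))/h_i$, $\delta^-_{x_i,h_i}V(\mathbf x)=(V(\mathbf x)-V(\mathbf x-h_i\mathbf e_i))/h_i$, $\delta^2_{x_i,h_i}V(\mathbf x)=(V(\mathbf x-h_i\mathbf e_i)-2V(\mathbf x)+V(\mathbf x+h_i\mathbf e_i))/h_i^2$, $\Delta_{\mathbf h}=\sum_{i=1}^d\delta^2_{x_i,h_i}$, and $\widehat\delta^2_{x_i,x_j;h_i,h_j}=\tfrac12(\delta^-_{x_j,h_j}\delta^+_{x_i,h_i}+\delta^+_{x_j,h_j}\delta^-_{x_i,h_i})$, $\widetilde\delta^2_{x_i,x_j;h_i,h_j}=\tfrac12(\delta^+_{x_j,h_j}\delta^+_{x_i,h_i}+\delta^-_{x_j,h_j}\delta^-_{x_i,h_i})$, $\overline\delta^2_{x_i,x_j;h_i,h_j}=\tfrac12(\widehat\delta^2_{x_i,x_j;h_i,h_j}+\widetilde\delta^2_{x_i,x_j;h_i,h_j})$. Let $\mathcal S_{\mathbf h}$ be the set of boundary nodes $\mathbf x_\alpha\in\mathcal T_{\mathbf h}\cap\partial\Omega$ such that $\mathbf x_\alpha+h_i\mathbf e_i\in\mathcal T_{\mathbf h}\cap\Omega$ or $\mathbf x_\alpha-h_i\mathbf e_i\in\mathcal T_{\mathbf h}\cap\Omega$ for some $i$. Let $J_0=|\mathcal T_{\mathbf h}\cap\Omega|$. Every vector in $\mathbb R^{J_0}$ (values at interior nodes) is extended to a grid function $V$ on $\mathcal T_{\mathbf h}'$ by setting $V=0$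 on $\mathcal T_{\mathbf h}\cap\partial\Omega$ and choosing the ghost values so that $\Delta_{\mathbf h}V_\alpha=0$ for all $\mathbf x_\alpha\in\mathcal S_{\mathbf h}$. Then $\widetilde D_{ij,0}$, $\widehat D_{ij,0}$, $\overline D_{ij,0}$ denote the $J_0\times J_0$ matrices representing the linear maps $V\mapsto(\widetilde\delta^2_{x_i,x_j;h_i,h_j}V_\alpha)_{\mathbf x_\alpha\in\mathcal T_{\mathbf h}\cap\Omega}$, $V\mapsto(\widehat\delta^2_{x_i,x_j;h_i,h_j}V_\alpha)$, $V\mapsto(\overline\delta^2_{x_i,x_j;h_i,h_j}V_\alpha)$ respectively, with this extension built in. *)

From HB Require Import structures.
From mathcomp Require Import all_boot all_order all_algebra.
From mathcomp Require Import reals.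
Set Implicit Arguments. Unset Strict Implicit. Unset Printing Implicit Defensive.
Import Order.TTheory GRing.Theory Num.Theory.
Local Open Scope ring_scope.

Section Grid.
Variables (R : realType) (d : nat) (a b : 'I_d -> R) (J : 'I_d -> nat).

(* The lattice point
   beta corresponds to the point with coordinates a_k + beta_k h_k, i.e. to
   the node x_alpha with alpha = beta + 1 when beta is in the mesh range. *)
Definition hstep (k : 'I_d) : R := (b k - a k) / ((J k)%:R - 1).

Definition pos (beta : 'I_d -> int) (k : 'I_d) : R := a k + (beta k)%:~R * hstep k.

Definition inTh (beta : 'I_d -> int) : bool :=
  [forall k, (0 <= beta k) && (beta k < (J k)%:Z)].

Definition inOmega (beta : 'I_d -> int) : bool :=
  [forall k, (a k < pos beta k) && (pos beta k < b k)].

Definition inClosure (beta : 'I_d -> int) : bool :=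
  [forall k, (a k <= pos beta k) && (pos beta k <= b k)].

Definition interior (beta : 'I_d -> int) : bool := inTh beta && inOmega beta.

Definition onBdry (beta : 'I_d -> int) : bool :=
  [&& inTh beta, inClosure beta & ~~ inOmega beta].

Definition shift (beta : 'I_d -> int) (i : 'I_d) (s : int) : 'I_d -> int :=
  fun k => if k == i then beta k + s else beta k.

Definition inS (beta : 'I_d -> int) : bool :=
  onBdry beta &&
  [exists i, interior (shift beta i 1) || interior (shift beta i (-1))].

Definition gridfun := ('I_d -> int) -> R.

Definition dplus (i : 'I_d) (V : gridfun) : gridfun :=
  fun beta => (V (shift beta i 1) - V beta) / hstep i.
Definition dminus (i : 'I_d) (V : gridfun) : gridfun :=
  fun beta => (V beta - V (shift beta i (-1))) / hstep i.
Definition d2 (i : 'I_d) (V : gridfun) : gridfun :=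
  fun beta => (V (shift beta i (-1)) - 2 * V beta + V (shift beta i 1)) / hstep i ^+ 2.
Definition lapl (V : gridfun) : gridfun :=
  fun beta => \sum_(i < d) d2 i V beta.

(* hat / tilde / bar mixed second differences; [dminus j (dplus i V)]
   is delta^-_{x_j} delta^+_{x_i} V. *)
Definition dhat (i j : 'I_d) (V : gridfun) : gridfun :=
  fun beta => 2^-1 * (dminus j (dplus i V) beta + dplus j (dminus i V) beta).
Definition dtilde (i j : 'I_d) (V : gridfun) : gridfun :=
  fun beta => 2^-1 * (dplus j (dplus i V) beta + dminus j (dminus i V) beta).
Definition dbar (i j : 'I_d) (V : gridfun) : gridfun :=
  fun beta => 2^-1 * (dhat i j V beta + dtilde i j V beta).

Definition mindex := {dffun forall k : 'I_d, 'I_(J k)}.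
Definition idx_of (al : mindex) : 'I_d -> int := fun k => ((al k : nat))%:Z.
Definition inner_node := {al : mindex | inOmega (idx_of al)}.
Definition node (p : inner_node) : 'I_d -> int := idx_of (val p).

Definition J0 : nat := #|{: inner_node}|.

(* [ext] is an admissible extension of vectors in R^{J_0} (values at the
   interior nodes) to grid functions on T'_h: it agrees with the vector at the
   interior nodes, vanishes on T_h \cap \partial Omega, and the ghost values
   are such that Delta_h V = 0 at every node of S_h. *)
Definition is_ghost_extension (ext : (inner_node -> R) -> gridfun) : Prop :=
  [/\ forall v (p : inner_node), ext v (node p) = v p,
      forall v beta, onBdry beta -> ext v beta = 0
    & forall v beta, inS beta -> lapl (ext v) beta = 0].

(* J_0 x J_0 matrix representing v |-> (op (ext v))(x_alpha), x_alpha interior;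
   column q is the image of the q-th unit vector. *)
Definition opmx (ext : (inner_node -> R) -> gridfun) (op : gridfun -> gridfun)
  : 'M[R]_J0 :=
  \matrix_(p, q) op (ext (fun r => (r == enum_val q)%:R)) (node (enum_val p)).

Definition Dtilde0 ext (i j : 'I_d) := opmx ext (dtilde i j).
Definition Dhat0 ext (i j : 'I_d) := opmx ext (dhat i j).
Definition Dbar0 ext (i j : 'I_d) := opmx ext (dbar i j).

End Grid.

Definition spd (R : realFieldType) (n : nat) (A : 'M[R]_n) : Prop :=
  A^T = A /\ forall x : 'cV[R]_n, x != 0 -> 0 < (x^T *m A *m x) 0 0.

Definition mxgt (R : realFieldType) (n : nat) (X Y : 'M[R]_n) : Prop := spd (X - Y).

From HB Require Import structures.
From mathcomp Require Import all_boot all_order all_algebra.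
From mathcomp Require Import boolp reals zify ring lra.
Set Implicit Arguments. Unset Strict Implicit. Unset Printing Implicit Defensive.
Import Order.TTheory GRing.Theory Num.Theory.
Local Open Scope ring_scope.

(* Let d_k be the unscaled second difference in direction k and V the ghost
   extension of a vector x.  Expanding the quotients, dtilde - dhat is
   (2 h_i h_j)^-1 d_j d_i and dbar is the mean of dhat and dtilde, so all
   reduces to the positive definiteness of x |-> (d_j d_i V)(interior nodes).
   For i <> j this stencil stays in the closed grid, where V is the zero
   extension Z x.  For i = j it reaches the ghost points, but at a point of S_h
   the condition Delta_h V = 0 forces d_i V = 0, every other second difference
   there seeing only zero boundary values; so d_i V may be replaced by d_i Z x
   cut off outside the interior.  Summing by parts over a box containing the
   grid, the quadratic form becomes the sum of squares of d+_i d+_j Z x, resp.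
   of that cut-off function: the matrix is a positive multiple of a Gram
   matrix, whose factor is injective since a function with vanishing forward
   difference that vanishes on the far face of the grid is zero. *)

Section LatticeCalculus.
Variables (R : comNzRingType) (d : nat).
Local Notation pt := ('I_d -> int).
Implicit Types (be : pt) (f F G : pt -> R) (k l : 'I_d) (s t lo hi : int).

Lemma shiftNK be k : shift (shift be k (-1)) k 1 = be.
Proof.
by apply: funext => l; rewrite /shift; case: eqP; rewrite ?addrNK.
Qed.

Lemma shiftK be k : shift (shift be k 1) k (-1) = be.
Proof.
by apply: funext => l; rewrite /shift; case: eqP; rewrite ?addrK.
Qed.

Lemma shiftC be k l s t : shift (shift be k s) l t = shift (shift be l t) k s.
Proof.
apply: funext => m; rewrite /shift.
by case: (m == l); case: (m == k); rewrite // addrAC.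
Qed.

Lemma near_shift be k t : -1 <= t <= 1 ->
  forall l, be l - 1 <= shift be k t l <= be l + 1.
Proof. by move=> t1 l; rewrite /shift; case: eqP; lia. Qed.

Lemma near_shift2 be k l s t : k != l -> -1 <= s <= 1 -> -1 <= t <= 1 ->
  forall m, be m - 1 <= shift (shift be l t) k s m <= be m + 1.
Proof.
move=> kl s1 t1 m; rewrite /shift; case: (eqVneq m k) => [->|mk].
  by rewrite (negbTE kl); lia.
by case: eqP; lia.
Qed.

Definition fdiff k f be : R := f (shift be k 1) - f be.
Definition bdiff k f be : R := f be - f (shift be k (-1)).
Definition ddiff k f be : R := f (shift be k (-1)) - 2 * f be + f (shift be k 1).

Lemma ddiffE k f be : ddiff k f be = bdiff k (fdiff k f) be.
Proof. by rewrite /ddiff /bdiff /fdiff shiftNK; ring. Qed.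

Lemma fdiff_ddiff i j f be : fdiff j (ddiff i f) be = ddiff i (fdiff j f) be.
Proof. by rewrite /fdiff /ddiff !(shiftC be j i); ring. Qed.

Lemma ddiff_congr k F G be :
  F (shift be k (-1)) = G (shift be k (-1)) -> F be = G be ->
  F (shift be k 1) = G (shift be k 1) -> ddiff k F be = ddiff k G be.
Proof. by rewrite /ddiff => -> -> ->. Qed.

Lemma fdiff_sum (I : finType) k (F : I -> pt -> R) (y : I -> R) be :
  fdiff k (fun g => \sum_r y r * F r g) be = \sum_r y r * fdiff k (F r) be.
Proof. by rewrite /fdiff -sumrB; apply: eq_bigr => r _; ring. Qed.

Lemma ddiff_sum (I : finType) k (F : I -> pt -> R) (y : I -> R) be :
  ddiff k (fun g => \sum_r y r * F r g) be = \sum_r y r * ddiff k (F r) be.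
Proof.
by rewrite /ddiff mulr_sumr -sumrB -big_split; apply: eq_bigr => r _ /=; ring.
Qed.

Lemma fdiff_eq0 k (m : int) f : (forall be, fdiff k f be = 0) ->
  (forall be, m <= be k -> f be = 0) -> forall be, f be = 0.
Proof.
move=> Df0 f0 be; have [n] : exists n : nat, m - be k <= n%:Z.
  by exists `|m - be k|%N; lia.
elim: n be => [|n IHn] be Hn; first by apply: f0; lia.
have /eqP := Df0 be; rewrite /fdiff IHn ?sub0r ?oppr_eq0 => [/eqP //|].
by rewrite /shift eqxx; lia.
Qed.

Definition eqpt (x y : pt) : bool := [forall l, x l == y l].

Lemma eqptP (x y : pt) : reflect (x = y) (eqpt x y).
Proof.
apply: (iffP forallP) => [H|-> l //].
by apply: funext => l; apply/eqP.
Qed.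

Definition supported lo hi f : Prop :=
  forall be, f be != 0 -> forall l, lo <= be l <= hi.

Lemma supported_fdiff k lo hi f :
  supported lo hi f -> supported (lo - 1) hi (fdiff k f).
Proof.
move=> sf be; rewrite /fdiff.
have [f0|/sf + _ l] := eqVneq (f be) 0; last by move/(_ l); lia.
by rewrite f0 subr0 => /sf H l; move: (H l); rewrite /shift; case: eqP; lia.
Qed.

Lemma supported_widen lo hi lo' hi' f :
  supported lo hi f -> lo' <= lo -> hi <= hi' -> supported lo' hi' f.
Proof. by move=> sf ? ? be /sf H l; have := H l; lia. Qed.

Section Box.
Variables (lo : int) (n : nat).
Local Notation cube := {ffun 'I_d -> 'I_n}.

Definition boxpt (c : cube) : pt := fun l => lo + (c l)%:Z.
Definition boxsum F : R := \sum_(c : cube) F (boxpt c).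

Lemma eq_boxsum F G : (forall be, F be = G be) -> boxsum F = boxsum G.
Proof. by move=> FG; apply: eq_bigr => c _. Qed.

Lemma boxpt_inj : injective boxpt.
Proof.
move=> c c' E; apply/ffunP => l; apply: ord_inj.
by have := congr1 (fun x : pt => x l) E; rewrite /boxpt /= => /addrI [].
Qed.

Lemma boxpt_surj be : (forall l, lo <= be l < lo + n%:Z) -> exists c, boxpt c = be.
Proof.
move=> H; have lt_n l : (`|be l - lo| < n)%N by have := H l; lia.
exists [ffun l => Ordinal (lt_n l)].
by apply: funext => l; rewrite /boxpt ffunE /=; have := H l; lia.
Qed.

Lemma eq0_on_box f : supported lo (lo + n%:Z - 1) f ->
  (forall c, f (boxpt c) = 0) -> forall be, f be = 0.
Proof.
move=> sf f0 be; have [//|/sf be_box] := eqVneq (f be) 0.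
have [c <-] : exists c, boxpt c = be by apply: boxpt_surj => l; move: (be_box l); lia.
exact: f0.
Qed.

Lemma boxsum_shift k F : supported (lo + 1) (lo + n%:Z - 1) F ->
  boxsum (fun be => F (shift be k 1)) = boxsum F.
Proof.
move=> sF; have F0 be l : ~ (lo + 1 <= be l <= lo + n%:Z - 1) -> F be = 0.
  by move=> Hl; have [//|/sF /(_ l)] := eqVneq (F be) 0.
(* Wrapping around is harmless: F vanishes on both faces of the box
   orthogonal to e_k. *)
pose rot (c : cube) : cube := [ffun l => if l == k then ordS (c l) else c l].
have rot_inj : injective rot.
  move=> c c' /ffunP E; apply/ffunP => l; have := E l; rewrite !ffunE.
  by case: eqP => // _; apply: ordS_inj.
rewrite /boxsum [RHS](reindex_inj rot_inj); apply: eq_bigr => c _.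
have [ck_lt|ck_max] := ltnP (c k).+1 n.
  congr F; apply: funext => l; rewrite /boxpt /rot /shift ffunE.
  by case: eqP => [->|//]; rewrite /= modn_small //; lia.
have ck_n : (c k).+1 = n by apply/eqP; rewrite eqn_leq ltn_ord ck_max.
rewrite (F0 _ k) ?(F0 _ k) //.
  by rewrite /boxpt /rot ffunE eqxx /= ck_n modnn; lia.
by rewrite /shift eqxx /boxpt; move: ck_n; set m := nat_of_ord _; lia.
Qed.

Lemma boxsum_by_parts k f G : supported (lo + 1) (lo + n%:Z - 1) f ->
  boxsum (fun be => f be * bdiff k G be) = - boxsum (fun be => fdiff k f be * G be).
Proof.
move=> sf.
have sfG : supported (lo + 1) (lo + n%:Z - 1) (fun be => f be * G (shift be k (-1))).
  by move=> be fG0; apply: sf; apply: contraNneq fG0 => ->; rewrite mul0r.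
have := boxsum_shift k sfG; rewrite /boxsum /= => E.
rewrite (eq_bigr (fun c => f (shift (boxpt c) k 1) * G (boxpt c))) in E;
  last by move=> c _; rewrite shiftK.
rewrite /bdiff /fdiff -sumrN.
under eq_bigr do rewrite mulrBr.
rewrite sumrB -E -sumrB; apply: eq_bigr => c _; ring.
Qed.

Lemma boxsum_dirac p F : (forall l, lo <= p l < lo + n%:Z) ->
  boxsum (fun be => (eqpt p be)%:R * F be) = F p.
Proof.
move=> /boxpt_surj [c0 <-]; rewrite /boxsum (bigD1 c0) //= big1 => [|c /negbTE c0c].
  by rewrite (introT (eqptP _ _) erefl) mul1r addr0.
by case: eqptP => [/boxpt_inj E|]; [rewrite E eqxx in c0c | rewrite mul0r].
Qed.

Lemma boxsum_mul_ddiff k f g : supported (lo + 1) (lo + n%:Z - 1) f ->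
  boxsum (fun be => f be * ddiff k g be) =
  - boxsum (fun be => fdiff k f be * fdiff k g be).
Proof.
by move=> sf; rewrite -boxsum_by_parts //; apply: eq_boxsum => be; rewrite ddiffE.
Qed.

Lemma boxsum_mul_ddiff2 i j f g : supported (lo + 2) (lo + n%:Z - 1) f ->
  boxsum (fun be => f be * ddiff j (ddiff i g) be) =
  boxsum (fun be => fdiff i (fdiff j f) be * fdiff i (fdiff j g) be).
Proof.
move=> sf; rewrite boxsum_mul_ddiff; last by refine (supported_widen sf _ _); lia.
under eq_boxsum do rewrite fdiff_ddiff.
rewrite boxsum_mul_ddiff ?opprK //.
by refine (supported_widen (supported_fdiff sf) _ _); lia.
Qed.

End Box.
End LatticeCalculus.

Lemma boxsum_sqr_eq0 (R : realDomainType) d lo n (f : ('I_d -> int) -> R) :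
  supported lo (lo + n%:Z - 1) f -> boxsum lo n (fun be => f be ^+ 2) = 0 ->
  forall be, f be = 0.
Proof.
move=> sf /eqP; rewrite psumr_eq0 => [/allP f0|c _]; last exact: sqr_ge0.
apply: (eq0_on_box sf) => c; apply/eqP; rewrite -sqrf_eq0.
exact: (implyP (f0 c (mem_index_enum c))).
Qed.

Section PositiveDefinite.
Variable R : realFieldType.

Lemma spd_scale n (c : R) (A : 'M[R]_n) : 0 < c -> spd A -> spd (c *: A).
Proof.
move=> c_gt0 [symA posA]; split=> [|x /posA xAx]; first by rewrite linearZ /= symA.
by rewrite -scalemxAr -scalemxAl mxE pmulr_rgt0.
Qed.

Lemma spd_mulmx_tr m n (G : 'M[R]_(m, n)) : row_free G -> spd (G *m G^T).
Proof.
move=> freeG; split=> [|x x_neq0]; first by rewrite trmx_mul trmxK.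
have y_neq0 : x^T *m G != 0.
  apply: contra x_neq0 => /eqP; rewrite -(mul0mx 1 G) => /(row_free_inj freeG) xT0.
  by rewrite -[x]trmxK xT0 trmx0.
set y := x^T *m G.
rewrite mulmxA -mulmxA -[G^T *m x]trmxK trmx_mul trmxK -/y mxE.
under eq_bigr do rewrite [y^T _ _]mxE -expr2.
rewrite lt_def sumr_ge0 ?andbT => [|c _]; last exact: sqr_ge0.
apply: contra y_neq0; rewrite psumr_eq0 => [/allP y0|c _]; last exact: sqr_ge0.
apply/eqP/matrixP => i c; rewrite ord1 [RHS]mxE; apply/eqP; rewrite -sqrf_eq0.
exact: (implyP (y0 c (mem_index_enum c))).
Qed.

Lemma mxgt_opp_midpoint n (X Y : 'M[R]_n) : mxgt X Y ->
  mxgt (- Y) (- (2^-1 *: (Y + X))) /\ mxgt (- (2^-1 *: (Y + X))) (- X).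
Proof.
have half_gt0 : 0 < 2^-1 :> R by rewrite invr_gt0.
move=> XY; split; rewrite /mxgt.
  suff -> : - Y - - (2^-1 *: (Y + X)) = 2^-1 *: (X - Y) by apply: spd_scale.
  by apply/matrixP => p q; rewrite !mxE; field.
suff -> : - (2^-1 *: (Y + X)) - - X = 2^-1 *: (X - Y) by apply: spd_scale.
by apply/matrixP => p q; rewrite !mxE; field.
Qed.

End PositiveDefinite.

Section GhostExtension.
Variables (R : realType) (d : nat) (a b : 'I_d -> R) (J : 'I_d -> nat).
Variable ext : (inner_node a b J -> R) -> gridfun R d.
Hypotheses (lt_ab : forall k, a k < b k) (J_ge2 : forall k, (2 <= J k)%N).
Hypothesis ext_ghost : is_ghost_extension ext.

Local Notation h := (hstep a b J).
Local Notation pt := ('I_d -> int).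
Local Notation inode := (inner_node a b J).
Implicit Types (be g : pt) (k l i j : 'I_d) (t : int).
Implicit Types (r p s : inode) (v w x : inode -> R).

Lemma hstep_gt0 k : 0 < h k.
Proof.
by rewrite /hstep divr_gt0 ?subr_gt0 // ltr1n; apply: J_ge2.
Qed.

Lemma b_hstep k : b k = a k + ((J k)%:Z - 1)%:~R * h k.
Proof.
have J_neq1 : (J k)%:R - 1 != 0 :> R.
  by rewrite subr_eq0 pnatr_eq1; have := J_ge2 k; lia.
by rewrite /hstep rmorphB /= mulrC mulfVK //; ring.
Qed.

Definition inner_pt be : bool := [forall l, 0 < be l < (J l)%:Z - 1].
Definition grid_pt be : bool := [forall l, 0 <= be l <= (J l)%:Z - 1].

Lemma inOmegaE be : inOmega a b J be = inner_pt be.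
Proof.
apply: eq_forallb => l; rewrite /pos ltrDl pmulr_lgt0 ?hstep_gt0 // ltr0z.
by rewrite {1}b_hstep ltrD2l ltr_pM2r ?hstep_gt0 // ltr_int.
Qed.

Lemma inClosureE be : inClosure a b J be = grid_pt be.
Proof.
apply: eq_forallb => l; rewrite /pos lerDl pmulr_lge0 ?hstep_gt0 // ler0z.
by rewrite {1}b_hstep lerD2l ler_pM2r ?hstep_gt0 // ler_int.
Qed.

Lemma inTh_grid be : grid_pt be -> inTh J be.
Proof. by move=> /forallP gbe; apply/forallP => l; have := gbe l; lia. Qed.

Lemma grid_inner be : inner_pt be -> grid_pt be.
Proof. by move=> /forallP ibe; apply/forallP => l; have := ibe l; lia. Qed.

Lemma interiorE be : interior a b J be = inner_pt be.
Proof.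
rewrite /interior inOmegaE; case ibe: (inner_pt be); rewrite ?andbF ?andbT //.
exact/inTh_grid/grid_inner.
Qed.

Lemma onBdry_grid be : grid_pt be -> ~~ inner_pt be -> onBdry a b J be.
Proof. by move=> gbe ibe; rewrite /onBdry inTh_grid // inClosureE gbe inOmegaE. Qed.

Lemma node_inner r : inner_pt (node r).
Proof. by rewrite -inOmegaE; apply: (valP r). Qed.

Lemma eqpt_node r p : eqpt (node r) (node p) = (r == p).
Proof.
apply/eqptP/eqP => [E|-> //]; apply: val_inj; apply/ffunP => l; apply: ord_inj.
by have := congr1 (fun x : pt => x l) E; rewrite /node /idx_of /= => -[].
Qed.

Lemma node_surj be : inner_pt be -> exists p, node p = be.
Proof.
move=> /forallP ibe; have lt_J k : (`|be k| < J k)%N by have := ibe k; lia.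
pose al : mindex J := [ffun k => Ordinal (lt_J k)].
have al_be : idx_of al = be.
  by apply: funext => k; rewrite /idx_of ffunE /=; have := ibe k; lia.
have al_in : inOmega a b J (idx_of al) by rewrite al_be inOmegaE; apply/forallP.
by exists (exist _ al al_in).
Qed.

Definition zext v be : R := \sum_r (eqpt (node r) be)%:R * v r.
Definition unitv (s : inode) : inode -> R := fun r => (r == s)%:R.

Lemma zext_node v p : zext v (node p) = v p.
Proof.
rewrite /zext (bigD1 p) //= eqpt_node eqxx mul1r big1 ?addr0 // => r /negbTE rp.
by rewrite eqpt_node rp mul0r.
Qed.

Lemma zext_outer v be : ~~ inner_pt be -> zext v be = 0.
Proof.
move=> ibe; rewrite /zext big1 // => r _.
by case: eqptP => [rbe|_]; [rewrite -rbe node_inner in ibe | rewrite mul0r].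
Qed.

Lemma zext_unitv s be : zext (unitv s) be = (eqpt (node s) be)%:R.
Proof.
rewrite /zext (bigD1 s) //= /unitv eqxx mulr1 big1 ?addr0 // => r /negbTE rs.
by rewrite rs mulr0.
Qed.

Lemma zext_sum x be : zext x be = \sum_s x s * zext (unitv s) be.
Proof. by apply: eq_bigr => s _; rewrite zext_unitv mulrC. Qed.

Lemma ext_grid v be : grid_pt be -> ext v be = zext v be.
Proof.
case: ext_ghost => ext_node ext_bdry _ gbe.
case ibe: (inner_pt be).
  by have [p <-] := node_surj ibe; rewrite ext_node zext_node.
by rewrite ext_bdry ?zext_outer ?ibe // onBdry_grid ?ibe.
Qed.

Lemma grid_near be g : inner_pt be ->
  (forall l, be l - 1 <= g l <= be l + 1) -> grid_pt g.
Proof.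
by move=> /forallP ibe near; apply/forallP => l; have := ibe l; have := near l; lia.
Qed.

Lemma grid_shift be k t : inner_pt be -> -1 <= t <= 1 -> grid_pt (shift be k t).
Proof. by move=> ibe t1; apply: (grid_near ibe); apply: near_shift. Qed.

Lemma grid_shift2 be k l (s t : int) : inner_pt be -> k != l ->
  -1 <= s <= 1 -> -1 <= t <= 1 -> grid_pt (shift (shift be l t) k s).
Proof. by move=> ibe kl s1 t1; apply: (grid_near ibe); apply: near_shift2. Qed.

Lemma ddiff_ext_zext v i g : grid_pt (shift g i (-1)) -> grid_pt g ->
  grid_pt (shift g i 1) -> ddiff i (ext v) g = ddiff i (zext v) g.
Proof. by move=> ? ? ?; apply: ddiff_congr; apply: ext_grid. Qed.

Lemma ddiff_ext_ghost v i be t : inner_pt be -> (t = 1 \/ t = -1) ->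
  ~~ inner_pt (shift be i t) -> ddiff i (ext v) (shift be i t) = 0.
Proof.
case: ext_ghost => _ ext_bdry ext_lapl ibe t1 ig; set g := shift be i t.
have gi : ~~ (0 < g i < (J i)%:Z - 1).
  apply: contra ig => gi; apply/forallP => l; case: (eqVneq l i) => [-> //|li].
  by rewrite /g /shift (negbTE li); apply: (forallP ibe).
have bdry_near g' :
    g' i = g i -> (forall l, be l - 1 <= g' l <= be l + 1) -> onBdry a b J g'.
  move=> g'i near; apply: onBdry_grid (grid_near ibe near) _.
  by apply: contra gi => /forallP /(_ i); rewrite g'i.
have bdry_shift k (s : int) : k != i -> -1 <= s <= 1 -> onBdry a b J (shift g k s).
  move=> ki s1; apply: bdry_near; first by rewrite /shift eq_sym (negbTE ki).
  by apply: near_shift2 => //; case: t1 => ->.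
have bdry_g : onBdry a b J g by apply: bdry_near => //; apply: near_shift; case: t1 => ->.
have gS : inS a b J g.
  rewrite /inS bdry_g; apply/existsP; exists i; rewrite !interiorE /g.
  by case: t1 => ->; rewrite ?shiftK ?shiftNK ibe ?orbT.
(* In Delta_h V g = 0 every term but d2_i sees only boundary values. *)
have := ext_lapl v g gS; rewrite /lapl (bigD1 i) //= big1 ?addr0 => [|k ki].
  move/eqP; rewrite mulf_eq0 invr_eq0 expf_eq0 (gt_eqF (hstep_gt0 i)) andbF orbF.
  by move/eqP.
by rewrite /d2 !ext_bdry ?bdry_shift //; [rewrite mulr0 subr0 addr0 mul0r | lia..].
Qed.

Definition inner_ddiff i v g : R := if inner_pt g then ddiff i (zext v) g else 0.

Lemma ddiff_ext_shift v i be t : inner_pt be -> (t = 1 \/ t = -1) ->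
  ddiff i (ext v) (shift be i t) = inner_ddiff i v (shift be i t).
Proof.
move=> ibe t1; rewrite /inner_ddiff.
case ig: (inner_pt _); last by rewrite ddiff_ext_ghost ?ig.
by apply: ddiff_ext_zext; [apply: grid_shift | apply: grid_inner | apply: grid_shift].
Qed.

Definition mixed_ddiff i j v : pt -> R :=
  if i == j then ddiff i (inner_ddiff i v) else ddiff j (ddiff i (zext v)).

Lemma ddiff2_ext_node v i j r :
  ddiff j (ddiff i (ext v)) (node r) = mixed_ddiff i j v (node r).
Proof.
have ir := node_inner r; rewrite /mixed_ddiff; case: eqVneq => [<-|ij].
  apply: ddiff_congr; rewrite ?ddiff_ext_shift //; try by [left | right].
  rewrite /inner_ddiff ir.
  by apply: ddiff_ext_zext; [apply: grid_shift | apply: grid_inner | apply: grid_shift].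
by apply: ddiff_congr; apply: ddiff_ext_zext;
  rewrite ?grid_shift2 ?grid_shift ?grid_inner // eq_sym.
Qed.

Definition Jmax : nat := \max_k J k.
(* The box [-1, Jmax]^d contains the supports of all the functions below, with
   one spare layer for the summations by parts. *)
Local Notation bsum := (boxsum (-1) Jmax.+2).
Local Notation cube := {ffun 'I_d -> 'I_Jmax.+2}.

Lemma inner_bound be : inner_pt be -> forall l, 1 <= be l <= Jmax%:Z.
Proof.
move=> /forallP ibe l; have := ibe l; have : (J l <= Jmax)%N by apply: leq_bigmax.
lia.
Qed.

Lemma supported_zext v : supported 1 Jmax%:Z (zext v).
Proof.
move=> be; case ibe: (inner_pt be); first by move=> _; apply: inner_bound.
by rewrite zext_outer ?ibe ?eqxx.
Qed.

Lemma supported_inner_ddiff i v : supported 1 Jmax%:Z (inner_ddiff i v).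
Proof.
move=> be; rewrite /inner_ddiff; case ibe: (inner_pt be); last by rewrite eqxx.
by move=> _; apply: inner_bound.
Qed.

Lemma boxsum_zext_unitv s F : bsum (fun be => zext (unitv s) be * F be) = F (node s).
Proof.
under eq_boxsum do rewrite zext_unitv.
by apply: boxsum_dirac => l; have := inner_bound (node_inner s) l; lia.
Qed.

Definition gram_factor i j v : pt -> R :=
  if i == j then inner_ddiff i v else fdiff i (fdiff j (zext v)).

Lemma supported_gram_factor i j v : supported (-1) Jmax%:Z (gram_factor i j v).
Proof.
rewrite /gram_factor; case: eqP => _.
  by refine (supported_widen (@supported_inner_ddiff i v) _ _).
by refine (supported_widen (supported_fdiff (supported_fdiff (@supported_zext v))) _ _).
Qed.

Lemma boxsum_zext_mixed_ddiff i j w v :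
  bsum (fun be => zext w be * mixed_ddiff i j v be) =
  bsum (fun be => gram_factor i j w be * gram_factor i j v be).
Proof.
have szw := @supported_zext w.
rewrite /mixed_ddiff /gram_factor; case: eqVneq => _; last first.
  by apply: boxsum_mul_ddiff2; refine (supported_widen szw _ _); lia.
rewrite boxsum_mul_ddiff; last by refine (supported_widen szw _ _); lia.
under eq_boxsum do rewrite mulrC.
rewrite -boxsum_mul_ddiff;
  last by refine (supported_widen (@supported_inner_ddiff i v) _ _); lia.
by apply: eq_boxsum => be; rewrite mulrC /inner_ddiff; case: ifP; rewrite ?mulr0.
Qed.

Lemma dtilde_sub_dhat i j (V : gridfun R d) be :
  dtilde a b J i j V be - dhat a b J i j V be =
  (2 * h i * h j)^-1 * ddiff j (ddiff i V) be.
Proof.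
have := hstep_gt0 i; have := hstep_gt0 j => hj hi.
rewrite /dtilde /dhat /dplus /dminus /ddiff; field.
by rewrite !gt_eqF.
Qed.

Lemma ext_dtilde_sub_dhat i j r s :
  dtilde a b J i j (ext (unitv s)) (node r) - dhat a b J i j (ext (unitv s)) (node r) =
  (2 * h i * h j)^-1 *
  bsum (fun be => gram_factor i j (unitv r) be * gram_factor i j (unitv s) be).
Proof.
rewrite dtilde_sub_dhat ddiff2_ext_node.
by rewrite -(boxsum_zext_unitv r (mixed_ddiff i j (unitv s))) boxsum_zext_mixed_ddiff.
Qed.

Lemma gram_factor_sum i j x be :
  gram_factor i j x be = \sum_r x r * gram_factor i j (unitv r) be.
Proof.
have zx : zext x = fun g => \sum_r x r * zext (unitv r) g.
  by apply: funext => g; apply: zext_sum.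
rewrite /gram_factor; case: eqVneq => _.
  rewrite /inner_ddiff; case: ifP => _; last by rewrite big1 // => r _; rewrite mulr0.
  by rewrite zx ddiff_sum.
have fzx : fdiff j (zext x) = fun g => \sum_r x r * fdiff j (zext (unitv r)) g.
  by apply: funext => g; rewrite zx fdiff_sum.
by rewrite fzx fdiff_sum.
Qed.

Lemma zext_eq0_of_fdiff k x :
  (forall be, fdiff k (zext x) be = 0) -> forall r, x r = 0.
Proof.
move=> Dzx0 r; rewrite -zext_node.
apply: (fdiff_eq0 Dzx0 (m := (J k)%:Z - 1)) => be Jbe.
by apply: zext_outer; apply/forallP => /(_ k); lia.
Qed.

Lemma gram_factor_eq0 i j x :
  (forall be, gram_factor i j x be = 0) -> forall r, x r = 0.
Proof.
rewrite /gram_factor; case: eqVneq => [_|ij] W0; last first.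
  apply: (zext_eq0_of_fdiff (k := j)).
  apply: (fdiff_eq0 W0 (m := (J i)%:Z - 1)) => be Jbe.
  rewrite /fdiff !zext_outer ?subr0 //; apply/forallP => /(_ i);
    by rewrite /shift ?(negbTE ij); lia.
have szx : supported (-1 + 1) (-1 + Jmax.+2%:Z - 1) (zext x).
  by refine (supported_widen (@supported_zext x) _ _); lia.
have zx_ddiff be : zext x be * ddiff i (zext x) be = 0.
  case ibe: (inner_pt be); last by rewrite zext_outer ?ibe ?mul0r.
  by have := W0 be; rewrite /inner_ddiff ibe => ->; rewrite mulr0.
have := boxsum_mul_ddiff i (zext x) szx.
under eq_boxsum do rewrite zx_ddiff.
rewrite {1}/boxsum big1 // => /esym /eqP; rewrite oppr_eq0 => /eqP sq0.
apply: (zext_eq0_of_fdiff (k := i)); apply: (boxsum_sqr_eq0 (n := Jmax.+2) (lo := -1)).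
  by refine (supported_widen (supported_fdiff (@supported_zext x)) _ _); lia.
by rewrite -sq0; apply: eq_boxsum => be; rewrite expr2.
Qed.

Definition gram_mx i j : 'M[R]_(J0 a b J, #|{: cube}|) :=
  \matrix_(p, c) gram_factor i j (unitv (enum_val p)) (boxpt (-1) (enum_val c)).

Lemma Dtilde0_sub_Dhat0 i j : Dtilde0 ext i j - Dhat0 ext i j =
  (2 * h i * h j)^-1 *: (gram_mx i j *m (gram_mx i j)^T).
Proof.
apply/matrixP => p q; rewrite !mxE ext_dtilde_sub_dhat; congr (_ * _).
by rewrite /boxsum big_enum_val; apply: eq_bigr => c _; rewrite !mxE.
Qed.

Lemma row_free_gram_mx i j : row_free (gram_mx i j).
Proof.
apply: inj_row_free => u u0; pose x r := u 0 (enum_rank r).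
have x0 : forall r, x r = 0.
  apply: (gram_factor_eq0 (i := i) (j := j)).
  have sW : supported (-1) (-1 + Jmax.+2%:Z - 1) (gram_factor i j x).
    by refine (supported_widen (@supported_gram_factor i j x) _ _); lia.
  apply: (eq0_on_box sW) => c.
  move/rowP/(_ (enum_rank c)): u0; rewrite !mxE => <-.
  rewrite gram_factor_sum big_enum_val; apply: eq_bigr => p _.
  by rewrite mxE enum_rankK /x enum_valK.
by apply/rowP => p; rewrite mxE; have := x0 (enum_val p); rewrite /x enum_valK.
Qed.

Lemma spd_Dtilde0_sub_Dhat0 i j : spd (Dtilde0 ext i j - Dhat0 ext i j).
Proof.
rewrite Dtilde0_sub_Dhat0; apply: spd_scale; last exact/spd_mulmx_tr/row_free_gram_mx.
by rewrite invr_gt0; apply: mulr_gt0; [apply: mulr_gt0|]; rewrite ?hstep_gt0.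
Qed.

End GhostExtension.

Lemma Dbar0E (R : realType) d (a b : 'I_d -> R) J
    (ext : (inner_node a b J -> R) -> gridfun R d) i j :
  Dbar0 ext i j = 2^-1 *: (Dhat0 ext i j + Dtilde0 ext i j).
Proof. by apply/matrixP => p q; rewrite !mxE. Qed.

Theorem lemma2p5 (R : realType) (d : nat) (a b : 'I_d -> R) (J : 'I_d -> nat)
  (ext : (inner_node a b J -> R) -> gridfun R d) :
  (2 <= d)%N ->
  (forall k, a k < b k) ->
  (forall k, 2 <= J k)%N ->
  is_ghost_extension ext ->
  forall i j : 'I_d,
    spd (Dtilde0 ext i j - Dhat0 ext i j) /\
    mxgt (- Dhat0 ext i j) (- Dbar0 ext i j) /\
    mxgt (- Dbar0 ext i j) (- Dtilde0 ext i j).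
Proof.
move=> _ lt_ab J_ge2 ext_ghost i j.
have gt := spd_Dtilde0_sub_Dhat0 lt_ab J_ge2 ext_ghost i j.
by split => //; rewrite Dbar0E; apply: mxgt_opp_midpoint.
Qed.
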